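(* Let $T$ be a simple tree of maximum degree 3 and let $Q=Q(T,4)$ be the graph defined below. Then $Q$ covers $T^{(3)}$, and every covering projection from $Q$ to $T^{(3)}$ is 4-fold (every vertex of $T^{(3)}$ has exactly 4 preimages). Moreover, in every covering projection $f:Q\to T^{(3)}$, the image $f(u_i)$ of every relevant vertex $u_i$ of $Q$ is a semi-simple vertex of $T^{(3)}$.
   Context: A graph may contain edges, loops and semi-edges (a semi-edge is a link with exactly one end-vertex, contributing 1 to that vertex's degree). A covering projection from $G$ to $H$ is a map $f$ sending vertices to vertices and links to links such that: for every edge $e$ of $H$ with end-vertices $u,v$, $f^{-1}(e)$ is a perfect matching between $f^{-1}(u)$ and $f^{-1}(v)$; for every loop $l$ of $H$ at $u$, $f^{-1}(l)$ is a disjoint union of cycles spanning $f^{-1}(u)$; for every semi-edge $s$ of $H$ at $u$, $f^{-1}(s)$ is a disjoint union of edges and semi-edges spanning $f^{-1}(u)$. $T^{(3)}$ is the 3-regular graph obtained from $T$ by attaching $3-\deg_T(u)$ semi-edges to each vertex $u$. A vertex is semi-simple if it is incident with no loops, no multiple edges and at most one semi-edge. The graph $Q(T,4)$: take four disjoint copies of $T$, denoting by $u_i$ the copy of $u\in V_T$ in the $i$-th copy ($i\in[4]$); for every $u$ with $\deg_T u=1$ add the edges $u_1u_2,u_2u_3,u_3u_4,u_4u_1$; for every $u$ with $\deg_T u=2$ add the edges $u_1u_3$ and $u_2u_4$. A vertex $u\in V_T$ is relevant if $\deg_T u=3$, or if $\deg_T u=2$ and $u$ has a neighbor $v$ in $T$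 with $\deg_T v\ge 2$; a vertex $u_i$ of $Q$ is relevant if $u$ is relevant in $T$. *)

From mathcomp Require Import all_boot.
Set Implicit Arguments. Unset Strict Implicit. Unset Printing Implicit Defensive.

(* A link l with [gends l = (u, None)] is a semi-edge at u;
   [gends l = (u, Some u)] is a loop at u;
   [gends l = (u, Some v)] with u <> v is an (ordinary) edge uv.      *)
Record graph := Graph {
  gV : finType;
  gL : finType;
  gends : gL -> gV * option gV }.

Definition end_deg (G : graph) (x : gV G) (g : gL G) : nat :=
  match gends g with
  | (u, None) => (u == x)
  | (u, Some v) => (u == x) + (v == x)
  end.

Definition deg_in (G : graph) (S : pred (gL G)) (x : gV G) : nat :=
  \sum_(g | S g) end_deg x g.

(* Covering projection (fv on vertices, fl on links), following the paper:
   - edge e=uv of H : f^-1(e) is a perfect matching between f^-1(u), f^-1(v)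
     (all its links are edges joining f^-1(u) to f^-1(v), and every vertex of
      f^-1(u) u f^-1(v) is incident with exactly one of them);
   - loop l at u : f^-1(l) is a disjoint union of cycles spanning f^-1(u)
     (its links are edges/loops inside f^-1(u), and the spanned subgraph is
      2-regular, i.e. a disjoint union of cycles, loops and digons included);
   - semi-edge s at u : f^-1(s) is a disjoint union of edges and semi-edges
     spanning f^-1(u) (its links are edges/semi-edges inside f^-1(u), each
     vertex of f^-1(u) incident with exactly one of them). *)
Definition covering (G H : graph) (fv : gV G -> gV H) (fl : gL G -> gL H)
  : Prop :=
  forall h : gL H,
  match gends h with
  | (u, None) =>
      (forall g, fl g = h ->
         match gends g with
         | (a, None) => fv a = u
         | (a, Some b) => a <> b /\ fv a = u /\ fv b = u
         end) /\
      (forall x, fv x = u -> deg_in (fun g => fl g == h) x = 1)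
  | (u, Some v) =>
      if u == v then
        (forall g, fl g = h ->
           exists a b, gends g = (a, Some b) /\ fv a = u /\ fv b = u) /\
        (forall x, fv x = u -> deg_in (fun g => fl g == h) x = 2)
      else
        (forall g, fl g = h ->
           exists a b, gends g = (a, Some b) /\
             ((fv a = u /\ fv b = v) \/ (fv a = v /\ fv b = u))) /\
        (forall x, fv x = u \/ fv x = v -> deg_in (fun g => fl g == h) x = 1)
  end.

Definition covers (G H : graph) : Prop :=
  exists (fv : gV G -> gV H) (fl : gL G -> gL H), covering fv fl.

(* semi-simple vertex: no loops, no multiple edges, at most one semi-edge *)
Definition semi_simple (H : graph) (v : gV H) : Prop :=
  (forall g, gends g <> (v, Some v)) /\
  (forall g1 g2 a1 b1 a2 b2, g1 <> g2 ->
     gends g1 = (a1, Some b1) -> gends g2 = (a2, Some b2) ->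
     a1 <> b1 -> (v = a1 \/ v = b1) ->
     ~ ((a1 = a2 /\ b1 = b2) \/ (a1 = b2 /\ b1 = a2))) /\
  (#|[pred g | gends g == (v, None)]| <= 1).

Section Tree.
Variables (VT : finType) (adj : rel VT).

Definition tdeg (u : VT) : nat := #|[pred v | adj u v]|.

Definition connected_graph : Prop := forall x y, connect adj x y.

(* no cycle (of length >= 3, the graph being simple) *)
Definition acyclic_graph : Prop :=
  ~ exists s : seq VT, [/\ 3 <= size s, uniq s & cycle adj s].

Definition is_tree : Prop := connected_graph /\ acyclic_graph.

Definition max_degree3 : Prop :=
  (forall u, tdeg u <= 3) /\ (exists u, tdeg u = 3).

(* edges of T, each listed once (oriented by enum_rank) *)
Definition Tedge := {p : VT * VT | adj p.1 p.2 && (enum_rank p.1 < enum_rank p.2)}.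
(* 3 - deg u semi-edges at u *)
Definition Tsemi := {p : VT * 'I_3 | tdeg p.1 <= p.2}.

Definition T3_ends (l : Tedge + Tsemi) : VT * option VT :=
  match l with
  | inl e => ((val e).1, Some (val e).2)
  | inr s => ((val s).1, None)
  end.

Definition T3 : graph := @Graph VT (Tedge + Tsemi)%type T3_ends.

(* Q(T,4): vertex (u, i) is u_{i+1} *)
Definition Qring := {p : VT * 'I_4 | tdeg p.1 == 1}.   (* u_i u_{i+1 mod 4} *)
Definition Qcross := {p : VT * 'I_2 | tdeg p.1 == 2}.  (* u_1u_3 and u_2u_4 *)

Definition QV := (VT * 'I_4)%type.

Definition Q_ends (l : (Tedge * 'I_4) + (Qring + Qcross)) : QV * option QV :=
  match l with
  | inl (e, i) => (((val e).1, i), Some ((val e).2, i))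
  | inr (inl r) => (((val r).1, (val r).2),
                    Some ((val r).1, (inord (((val r).2).+1 %% 4) : 'I_4)))
  | inr (inr c) => (((val c).1, (inord (val c).2 : 'I_4)),
                    Some ((val c).1, (inord ((val c).2 + 2) : 'I_4)))
  end.

Definition Q4 : graph :=
  @Graph (QV)%type ((Tedge * 'I_4) + (Qring + Qcross))%type Q_ends.

Definition relevant (u : VT) : bool :=
  (tdeg u == 3) || ((tdeg u == 2) && [exists v, adj u v && (2 <= tdeg v)]).

End Tree.

From mathcomp Require Import all_boot.
Set Implicit Arguments. Unset Strict Implicit. Unset Printing Implicit Defensive.

(* The projection (u, i) |-> u covers T^(3) once the ring links at a leaf are sent, according
   to the parity of i, to its two semi-edges, and the cross links at a vertex of degree 2 to
   its semi-edge. Every edge of T^(3) lifts to a perfect matching between the fibres of its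
   ends, so in any covering all fibres have the same size, which is 4 since |V(Q)| = 4|V(T)|.
   For semi-simplicity it suffices that a vertex x of Q with deg_T x.1 >= 2 never lies over a
   leaf w of T. Links of Q preserve the parity of the copy index, except ring links at leaves.
   The two semi-edges at w lift to a 4-cycle through x on the fibre of w, and a vertex of the
   other parity in this fibre would force the two cycle neighbours of x to coincide; so the
   fibre of w has constant parity. A lift of an edge of T that changed parity would be a ring
   link at a leaf l; as T has no cycles of length 3 or 4, the image of that ring backtracks,
   putting two copies of l of different parities in one fibre. Propagating along T, all of Q
   would have the parity of x, which is absurd. *)

Lemma sig_pair_eq (A B : Type) (P : pred (A * B)) (u w : {p | P p}) :
  (sval u).1 = (sval w).1 -> (sval u).2 = (sval w).2 -> u = w.
Proof.
case: u w => [[a b] Pu] [[a' b'] Pw] /= E1 E2; subst; congr exist; exact: bool_irrelevance.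
Qed.

Lemma sum_indicator (I : finType) (P : pred I) (a : I) :
  \sum_(i | P i) (a == i) = P a.
Proof.
rewrite big_mkcond (bigD1 a) //= eqxx big1 ?addn0; first by case: (P a).
by move=> i /negPf ai; rewrite eq_sym ai; case: (P i).
Qed.

Definition succ4 (j : 'I_4) : 'I_4 := inord (j.+1 %% 4).
Definition pred4 (j : 'I_4) : 'I_4 := succ4 (succ4 (succ4 j)).

Lemma succ4E j : succ4 j = j.+1 %% 4 :> nat.
Proof. by rewrite inordK // ltn_pmod. Qed.

Lemma succ4_neq j : succ4 j != j.
Proof. by rewrite -val_eqE /= succ4E; case: j => [[|[|[|[|?]]]] ?]. Qed.

Lemma succ4_succ4_neq j : succ4 (succ4 j) != j.
Proof. by rewrite -val_eqE /= !succ4E; case: j => [[|[|[|[|?]]]] ?]. Qed.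

Lemma pred4_neq j : pred4 j != j.
Proof. by rewrite -val_eqE /= !succ4E; case: j => [[|[|[|[|?]]]] ?]. Qed.

Lemma pred4K j : succ4 (pred4 j) = j.
Proof. by apply: val_inj; rewrite /= !succ4E; case: j => [[|[|[|[|?]]]] ?]. Qed.

Lemma odd_succ4 j : odd (succ4 j) = ~~ odd j.
Proof. by rewrite succ4E; case: j => [[|[|[|[|?]]]] ?]. Qed.

Lemma odd_pred4 j : odd (pred4 j) = ~~ odd j.
Proof. by rewrite !odd_succ4 negbK. Qed.

Definition pick_ring (k : 'I_4) (b : bool) : 'I_4 :=
  if odd k == b then k else pred4 k.

Lemma odd_pick_ring k b : odd (pick_ring k b) = b.
Proof.
by rewrite /pick_ring; case: eqP => [|/eqP]; rewrite ?odd_pred4; case: b; case: odd.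
Qed.

Lemma ring_ends_pick (k j : 'I_4) b : odd j = b ->
  (j == k) || (succ4 j == k) = (j == pick_ring k b).
Proof.
move=> <-; rewrite /pick_ring /pred4.
case: k => [[|[|[|[|?]]]] ?]; case: j => [[|[|[|[|?]]]] ?] //=;
  by rewrite -!val_eqE /= !succ4E.
Qed.

Lemma ring_end_count j k : (j == k) + (succ4 j == k) = (j == k) || (succ4 j == k).
Proof. by case: eqP => [<-|_]; rewrite ?(negPf (succ4_neq j)). Qed.

Definition cross_lo (c : 'I_2) : 'I_4 := inord c.
Definition cross_hi (c : 'I_2) : 'I_4 := inord (c + 2).

Lemma cross_loE c : cross_lo c = c :> nat.
Proof. by rewrite inordK // (leq_trans (ltn_ord c)). Qed.

Lemma cross_hiE c : cross_hi c = c + 2 :> nat.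
Proof. by rewrite inordK //; case: c => [[|[|?]] ?]. Qed.

Lemma cross_lo_hi_neq c d : cross_lo c != cross_hi d.
Proof.
by rewrite -val_eqE /= cross_loE cross_hiE; case: c => [[|[|?]] ?]; case: d => [[|[|?]] ?].
Qed.

Lemma odd_cross_hi c : odd (cross_hi c) = odd (cross_lo c).
Proof. by rewrite cross_loE cross_hiE oddD addbF. Qed.

Lemma cross_lo_inj : injective cross_lo.
Proof. by move=> c d /(congr1 val); rewrite /= !cross_loE => /val_inj. Qed.

Lemma cross_end_count c k :
  (cross_lo c == k) + (cross_hi c == k) = (cross_lo c == k) || (cross_hi c == k).
Proof. by case: eqP => [<-|_]; rewrite // eq_sym (negPf (cross_lo_hi_neq c c)). Qed.

Definition pick_cross (k : 'I_4) : 'I_2 := inord (k %% 2).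

Lemma cross_ends_pick (k : 'I_4) c :
  (cross_lo c == k) || (cross_hi c == k) = (c == pick_cross k).
Proof.
rewrite -!val_eqE /= cross_loE cross_hiE inordK ?ltn_pmod //.
by case: k => [[|[|[|[|?]]]] ?]; case: c => [[|[|?]] ?].
Qed.

Section Graph.
Variable G : graph.
Implicit Types (g : gL G) (x y : gV G) (S : pred (gL G)).

Definition joins g x y := gends g = (x, Some y) \/ gends g = (y, Some x).

Lemma joins_sym g x y : joins g x y -> joins g y x.
Proof. by case; [right | left]. Qed.

Lemma end_degE g a b x : gends g = (a, Some b) -> end_deg x g = (a == x) + (b == x).
Proof. by rewrite /end_deg => ->. Qed.

Lemma end_deg_joins g x y : joins g x y -> 0 < end_deg x g.
Proof. by case=> /end_degE ->; rewrite eqxx ?addn1. Qed.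

Lemma end_deg_gt0_joins g a b x : gends g = (a, Some b) -> 0 < end_deg x g ->
  exists y, joins g x y.
Proof.
move=> Eg; rewrite (end_degE _ Eg).
have [<- _|_] := eqVneq a x; first by exists b; left.
by have [<- _|//] := eqVneq b x; exists a; right.
Qed.

Lemma deg_in_gt0 S x : 0 < deg_in S x -> exists2 g, S g & 0 < end_deg x g.
Proof.
move=> pos; apply/exists_inP; apply: contraTT pos => /exists_inPn none.
rewrite -leqNgt leqn0 /deg_in sum_nat_eq0.
by apply/forall_inP => g /none; rewrite -leqNgt leqn0.
Qed.

Lemma deg_in_eq1 S x g0 : S g0 -> end_deg x g0 = 1 ->
  (forall g, S g -> 0 < end_deg x g -> g = g0) -> deg_in S x = 1.
Proof.
move=> Sg0 deg0 uniq0; rewrite /deg_in (bigD1 g0) //= deg0 big1 // => g /andP [Sg ne].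
by apply/eqP; rewrite -leqn0 leqNgt; apply: contra ne => /(uniq0 _ Sg) ->.
Qed.

Lemma deg_in_ge2 S x g1 g2 : g1 != g2 -> S g1 -> S g2 ->
  0 < end_deg x g1 -> 0 < end_deg x g2 -> 1 < deg_in S x.
Proof.
move=> ne S1 S2 d1 d2; rewrite /deg_in (bigD1 g1) //= (bigD1 g2) /=; last by rewrite S2 eq_sym.
by rewrite addnA (leq_trans _ (leq_addr _ _)) // (leq_add d1 d2).
Qed.

End Graph.

Section Covering.
Variables (G H : graph) (fv : gV G -> gV H) (fl : gL G -> gL H).
Hypothesis cov : covering fv fl.

Lemma covering_edge h u v : gends h = (u, Some v) -> u != v ->
  (forall g, fl g = h -> exists a b, gends g = (a, Some b) /\
     ((fv a = u /\ fv b = v) \/ (fv a = v /\ fv b = u))) /\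
  (forall x, fv x = u \/ fv x = v -> deg_in (fun g => fl g == h) x = 1).
Proof. by move=> Eh uv; have := cov h; rewrite Eh (negPf uv). Qed.

Lemma covering_semi h u : gends h = (u, None) ->
  (forall g a b, fl g = h -> gends g = (a, Some b) -> fv a = u /\ fv b = u) /\
  (forall x, fv x = u -> deg_in (fun g => fl g == h) x = 1).
Proof.
move=> Eh; have := cov h; rewrite Eh => -[lift deg]; split=> // g a b /lift.
by move=> + Eg; rewrite Eg => -[_].
Qed.

Lemma covering_edge_joins h u v g x y : gends h = (u, Some v) -> u != v ->
  fl g = h -> joins g x y -> joins h (fv x) (fv y).
Proof.
move=> Eh uv /(covering_edge Eh uv).1 [a [b [Eg fab]]].
by rewrite /joins Eh Eg => -[] [<- <-]; case: fab => -[-> ->]; [left | right | right | left].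
Qed.

Lemma covering_semi_joins h u g x y : gends h = (u, None) ->
  fl g = h -> joins g x y -> fv x = u /\ fv y = u.
Proof.
move=> Eh Fg; have lift := (covering_semi Eh).1 g _ _ Fg.
by case=> /lift [-> ->].
Qed.

Lemma card_fiber_edge_preimage h u v w : gends h = (u, Some v) -> u != v ->
  (w == u) || (w == v) -> #|[pred x | fv x == w]| = #|[pred g | fl g == h]|.
Proof.
move=> Eh uv w_end; have [lift deg] := covering_edge Eh uv.
rewrite -!sum1_card.
transitivity (\sum_(x | fv x == w) deg_in (fun g => fl g == h) x).
  by apply: eq_bigr => x /eqP fx; rewrite deg //; case/orP: w_end => /eqP <-; [left | right].
rewrite /deg_in exchange_big /=; apply: eq_bigr => g /eqP /lift [a [b [Eg fab]]].
rewrite (eq_bigr (fun x => (a == x) + (b == x))) => [|x _]; last exact: end_degE.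
rewrite big_split /= !sum_indicator.
case/orP: w_end => /eqP ->; case: fab => -[-> ->];
  by rewrite eqxx ?(negPf uv) // eq_sym (negPf uv).
Qed.

Lemma card_fiber_edge h u v : gends h = (u, Some v) -> u != v ->
  #|[pred x | fv x == u]| = #|[pred x | fv x == v]|.
Proof.
move=> Eh uv; rewrite (card_fiber_edge_preimage (w := u) Eh) ?eqxx //.
by rewrite (card_fiber_edge_preimage (w := v) Eh) ?eqxx ?orbT.
Qed.

End Covering.

Section Tree.
Variables (VT : finType) (adj : rel VT).
Hypotheses (adj_sym : symmetric adj) (adj_irr : irreflexive adj).
Hypothesis T_tree : is_tree adj.

Lemma adj_neq a b : adj a b -> a != b.
Proof. by apply: contraTneq => ->; rewrite adj_irr. Qed.

Lemma tree_no_triangle a b c : adj a b -> adj b c -> adj c a -> False.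
Proof.
move=> ab bc ca; case: T_tree => _; apply; exists [:: a; b; c].
split=> //=; last by rewrite ab bc ca.
by rewrite !inE negb_or (adj_neq ab) (adj_neq bc) eq_sym (adj_neq ca).
Qed.

Lemma tree_no_square a b c d : adj a b -> adj b c -> adj c d -> adj d a ->
  a != c -> b != d -> False.
Proof.
move=> ab bc cd da ac bd; case: T_tree => _; apply; exists [:: a; b; c; d].
split=> //=; last by rewrite ab bc cd da.
by rewrite !inE !negb_or (adj_neq ab) (adj_neq bc) (adj_neq cd) ac bd eq_sym (adj_neq da).
Qed.

Lemma connected_ind (P : VT -> Prop) w :
  (forall z z', P z -> adj z z' -> P z') -> P w -> forall z, P z.
Proof.
move=> step Pw z; case: T_tree => conn _; case/connectP: (conn w z) => p.
elim: p w Pw => [w Pw _ -> //|y p IHp] w Pw /= /andP [wy py] z_last.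
exact: IHp (step _ _ Pw wy) py z_last.
Qed.

Lemma tdeg_gt0 : max_degree3 adj -> forall u, 0 < tdeg adj u.
Proof.
case=> _ [c degc] u; have [-> | uc] := eqVneq u c; first by rewrite degc.
case: T_tree => conn _; case/connectP: (conn u c) => -[_ cu | v p /= /andP [uv _] _].
  by rewrite cu eqxx in uc.
by apply/card_gt0P; exists v.
Qed.

Lemma tedge_adj (e : Tedge adj) : adj (val e).1 (val e).2.
Proof. by case/andP: (valP e). Qed.

Lemma tedge_neq (e : Tedge adj) : (val e).1 != (val e).2.
Proof. exact: adj_neq (tedge_adj e). Qed.

Lemma tedge_lt (e : Tedge adj) : enum_rank (val e).1 < enum_rank (val e).2.
Proof. by case/andP: (valP e). Qed.

Notation T3link := (gL (T3 adj)).

Lemma T3_joins_end e u v : joins (inl e : T3link) u v -> u = (val e).1 \/ u = (val e).2.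
Proof. by case=> -[E1 E2]; [left; rewrite E1 | right; rewrite E2]. Qed.

Lemma T3_joins_adj e u v : joins (inl e : T3link) u v -> adj u v.
Proof. by case=> -[<- <-]; rewrite ?[adj (val e).2 _]adj_sym tedge_adj. Qed.

Lemma T3_joins_eq e u v w : joins (inl e : T3link) u v -> joins (inl e : T3link) u w -> v = w.
Proof.
move=> J1 J2; have ne := tedge_neq e.
case: J1 J2 => -[E1 E2] [] [E3 E4].
- by rewrite -E2 -E4.
- by move: ne; rewrite E1 E4 eqxx.
- by move: ne; rewrite E2 E3 eqxx.
- by rewrite -E1 -E3.
Qed.

Lemma T3_joins_inj e1 e2 u v :
  joins (inl e1 : T3link) u v -> joins (inl e2 : T3link) u v -> e1 = e2.
Proof.
move=> J1 J2; have lt1 := tedge_lt e1; have lt2 := tedge_lt e2.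
have [[E1 E2] | [E1 E2]] : (val e1).1 = (val e2).1 /\ (val e1).2 = (val e2).2 \/
                           (val e1).1 = (val e2).2 /\ (val e1).2 = (val e2).1.
  by case: J1 J2 => -[-> ->] [] [-> ->]; [left | right | right | left].
- exact: sig_pair_eq E1 E2.
- by move: lt1; rewrite E1 E2 => /(ltn_trans lt2); rewrite ltnn.
Qed.

Lemma T3_joinsP u v : adj u v -> exists e, joins (inl e : T3link) u v.
Proof.
wlog lt_uv : u v / enum_rank u < enum_rank v => [hwlog uv | uv].
  have [lt | gt | eq] := ltngtP (enum_rank u) (enum_rank v).
  - exact: hwlog.
  - have vu : adj v u by rewrite adj_sym.
    by have [e J] := hwlog v u gt vu; exists e; apply: joins_sym.
  - by move: (adj_neq uv); rewrite (enum_rank_inj (val_inj eq)) eqxx.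
have Puv : adj (u, v).1 (u, v).2 && (enum_rank (u, v).1 < enum_rank (u, v).2).
  by rewrite /= uv lt_uv.
by exists (exist _ (u, v) Puv); left.
Qed.

Lemma semi_simple_T3 v : 1 < tdeg adj v -> semi_simple (v : gV (T3 adj)).
Proof.
move=> deg_v; split; [|split].
- by case=> [e|s] //= [E1 E2]; move: (tedge_neq e); rewrite E1 E2 eqxx.
- case=> [e1|s1] [e2|s2] a1 b1 a2 b2 e12 //= [E1 E2] [E3 E4] _ _ J; apply: e12.
  congr inl; apply: (@T3_joins_inj _ _ a1 b1); rewrite /joins /= ?E1 ?E2 ?E3 ?E4.
    by left.
  by case: J => -[-> ->]; [left | right].
- have index_max a (i : 'I_3) : a = v -> tdeg adj a <= i -> i = ord_max.
    move=> -> deg_i; apply/val_inj/eqP; rewrite /= eqn_leq -ltnS ltn_ord /=.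
    exact: leq_trans deg_v deg_i.
  apply/card_le1_eqP => -[e|[[a i] ai]] [e'|[[a' i'] ai']];
    rewrite !inE !xpair_eqE /= ?andbF ?andbT // => /eqP Ea /eqP Ea'.
  congr inr; apply: sig_pair_eq; rewrite /= ?Ea ?Ea' //.
  by rewrite (index_max a i Ea ai) (index_max a' i' Ea' ai').
Qed.

Section CoveringT3.
Variables (G : graph) (fv : gV G -> gV (T3 adj)) (fl : gL G -> T3link).
Hypothesis cov : covering fv fl.

Lemma covering_T3_joins g x y : joins g x y ->
  (exists s, [/\ fl g = inr s, fv x = (val s).1 & fv y = (val s).1]) \/
  (exists e, fl g = inl e /\ joins (inl e : T3link) (fv x) (fv y)).
Proof.
move=> J; case Fg: (fl g) => [e|s]; [right | left].
- exists e; split=> //.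
  exact: (covering_edge_joins cov (h := inl e) erefl (tedge_neq e) Fg J).
- by exists s; have [-> ->] := covering_semi_joins cov (h := inr s) erefl Fg J.
Qed.

Lemma covering_T3_adj g x y : joins g x y -> fv x != fv y -> adj (fv x) (fv y).
Proof.
move=> J; case: (covering_T3_joins J) => [[s [_ -> ->]]|[e [_ /T3_joins_adj //]]].
by rewrite eqxx.
Qed.

Lemma covering_T3_loc_inj g1 g2 x y1 y2 : joins g1 x y1 -> joins g2 x y2 ->
  g1 != g2 -> fv y1 = fv y2 -> fv x != fv y1 -> False.
Proof.
move=> J1 J2 g12 fy12 fxy.
have edge_of g y : joins g x y -> fv y = fv y1 ->
    exists2 e, fl g = inl e & joins (inl e : T3link) (fv x) (fv y1).
  move=> J fy; case: (covering_T3_joins J) => [[s [_ sx sy]]|[e [Fg Je]]].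
    by move: fxy; rewrite -fy sx sy eqxx.
  by exists e; rewrite -?fy.
have [e F1 Je] := edge_of _ _ J1 erefl; have [e' F2 Je'] := edge_of _ _ J2 (esym fy12).
have [_ deg] := covering_edge cov (h := inl e) erefl (tedge_neq e).
have S1 : fl g1 == inl e by rewrite F1.
have S2 : fl g2 == inl e by rewrite F2 (T3_joins_inj Je' Je).
have := deg_in_ge2 (S := fun g => fl g == inl e) g12 S1 S2
                   (end_deg_joins J1) (end_deg_joins J2).
by rewrite deg //; exact: T3_joins_end Je.
Qed.

Lemma covering_T3_no_4cycle (x0 x1 x2 x3 : gV G) (g0 g1 g2 g3 : gL G) :
  joins g0 x0 x1 -> joins g1 x1 x2 -> joins g2 x2 x3 -> joins g3 x3 x0 ->
  g0 != g1 -> g0 != g3 -> fv x0 != fv x1 -> fv x0 != fv x3 -> False.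
Proof.
move=> J0 J1 J2 J3 g01 g03 f01 f03.
have a01 := covering_T3_adj J0 f01.
have a03 := covering_T3_adj (joins_sym J3) f03.
have f13 : fv x1 != fv x3.
  by apply/eqP => f13; apply: (covering_T3_loc_inj J0 (joins_sym J3) g03 f13 f01).
have [f20 | f20] := eqVneq (fv x2) (fv x0).
  by apply: (covering_T3_loc_inj (joins_sym J0) J1 g01 (esym f20)); rewrite eq_sym.
have [f21 | f21] := eqVneq (fv x2) (fv x1).
  have a13 : adj (fv x1) (fv x3) by rewrite -f21 (covering_T3_adj J2) // f21.
  by apply: (tree_no_triangle a01 a13); rewrite adj_sym.
have [f23 | f23] := eqVneq (fv x2) (fv x3).
  have a13 : adj (fv x1) (fv x3) by rewrite -f23 (covering_T3_adj J1) // eq_sym.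
  by apply: (tree_no_triangle a01 a13); rewrite adj_sym.
have a12 : adj (fv x1) (fv x2) by apply: (covering_T3_adj J1); rewrite eq_sym.
have a23 := covering_T3_adj J2 f23.
by apply: (tree_no_square a01 a12 a23 _ _ f13); rewrite 1?adj_sym // eq_sym.
Qed.

Lemma covering_T3_lift_adj x z : adj (fv x) z -> exists g y, joins g x y /\ fv y = z.
Proof.
move=> xz; have [e Je] := T3_joinsP xz.
have [lift deg] := covering_edge cov (h := inl e) erefl (tedge_neq e).
have [g /eqP Fg pos] : exists2 g, fl g == inl e & 0 < end_deg x g.
  by apply: deg_in_gt0; rewrite deg //; exact: T3_joins_end Je.
have [a [b [Eg _]]] := lift g Fg; have [y J] := end_deg_gt0_joins Eg pos.
exists g, y; split=> //; apply: T3_joins_eq (Je).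
exact: (covering_edge_joins cov (h := inl e) erefl (tedge_neq e) Fg J).
Qed.

Lemma card_fiber_T3 u v : #|[pred x | fv x == u]| = #|[pred x | fv x == v]|.
Proof.
pose c := #|[pred x | fv x == u]|.
suff fiber_c : forall z, #|[pred x | fv x == z]| = c by rewrite fiber_c.
apply: (@connected_ind (fun z => #|[pred x | fv x == z]| = c) u) => // z z' <- zz'.
have [e Je] := T3_joinsP zz'.
have := card_fiber_edge cov (h := inl e) erefl (tedge_neq e).
by case: Je => -[<- <-] // /esym.
Qed.

End CoveringT3.
End Tree.

Section Q4.
Variables (VT : finType) (adj : rel VT).
Hypotheses (adj_sym : symmetric adj) (adj_irr : irreflexive adj).
Hypotheses (T_tree : is_tree adj) (T_maxdeg : max_degree3 adj).

Notation Q := (Q4 adj).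
Implicit Types (g : gL Q) (x y : gV Q).

Lemma Qring_deg (r : Qring adj) : tdeg adj (val r).1 = 1.
Proof. exact/eqP/(valP r). Qed.

Lemma Qcross_deg (c : Qcross adj) : tdeg adj (val c).1 = 2.
Proof. exact/eqP/(valP c). Qed.

Lemma Q_ring_ends (r : Qring adj) : gends (inr (inl r) : gL Q) =
  (((val r).1, (val r).2), Some ((val r).1, succ4 (val r).2)).
Proof. by []. Qed.

Lemma Q_cross_ends (c : Qcross adj) : gends (inr (inr c) : gL Q) =
  (((val c).1, cross_lo (val c).2), Some ((val c).1, cross_hi (val c).2)).
Proof. by []. Qed.

Definition ring_link (l : VT) (Hl : tdeg adj l == 1) (j : 'I_4) : gL Q :=
  inr (inl (exist (fun p : VT * 'I_4 => tdeg adj p.1 == 1) (l, j) Hl)).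

Definition cross_link (l : VT) (Hl : tdeg adj l == 2) (c : 'I_2) : gL Q :=
  inr (inr (exist (fun p : VT * 'I_2 => tdeg adj p.1 == 2) (l, c) Hl)).

Lemma ring_link_joins l (Hl : tdeg adj l == 1) j : joins (ring_link Hl j) (l, j) (l, succ4 j).
Proof. by left. Qed.

Lemma Q_link_ends g : exists a b, gends g = (a, Some b) /\ a != b.
Proof.
case: g => [[e i]|[r|c]]; [| rewrite Q_ring_ends | rewrite Q_cross_ends];
  (do 2 eexists; split; first by []); rewrite xpair_eqE negb_and.
- by rewrite tedge_neq.
- by rewrite eq_sym succ4_neq orbT.
- by rewrite cross_lo_hi_neq orbT.
Qed.

Lemma Q_joins_neq g x y : joins g x y -> x != y.
Proof.
have [a [b [Eg ab]]] := Q_link_ends g.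
by rewrite /joins Eg => -[] [<- <-] //; rewrite eq_sym.
Qed.

Lemma Q_joins_parity g a b : joins g a b -> odd a.2 != odd b.2 ->
  tdeg adj a.1 = 1 /\ a.1 = b.1.
Proof.
case: g => [[e i]|[r|c]]; rewrite /joins ?Q_ring_ends ?Q_cross_ends => -[] [<- <-] /=;
  by rewrite ?eqxx ?Qring_deg ?odd_cross_hi ?eqxx.
Qed.

Lemma Q_joins_copy g a b : joins g a b -> a.1 != b.1 -> a.2 = b.2.
Proof.
case: g => [[e i]|[r|c]]; rewrite /joins ?Q_ring_ends ?Q_cross_ends => -[] [<- <-];
  by rewrite /= ?eqxx.
Qed.

Lemma Q_ring_cross_neq (r : Qring adj) (c : Qcross adj) : (val r).1 != (val c).1.
Proof. by apply/eqP => E; move: (Qring_deg r); rewrite E Qcross_deg. Qed.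

Lemma Q_ends_inj : injective (@gends Q).
Proof.
case=> [[e1 i1]|[r1|c1]] [[e2 i2]|[r2|c2]];
  rewrite ?Q_ring_ends ?Q_cross_ends /= => -[] E1 E1' E2 E2'.
- by rewrite (sig_pair_eq E1 E2) E1'.
- by move: (tedge_neq adj_irr e1); rewrite E1 E2 eqxx.
- by move: (tedge_neq adj_irr e1); rewrite E1 E2 eqxx.
- by move: (tedge_neq adj_irr e2); rewrite -E1 -E2 eqxx.
- by rewrite (sig_pair_eq E1 E1').
- by move: (Q_ring_cross_neq r1 c2); rewrite E1 eqxx.
- by move: (tedge_neq adj_irr e2); rewrite -E1 -E2 eqxx.
- by move: (Q_ring_cross_neq r2 c1); rewrite E1 eqxx.
- by rewrite (sig_pair_eq E1 (cross_lo_inj E1')).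
Qed.

Lemma Q_ends_flip g1 g2 x y : gends g1 = (x, Some y) -> gends g2 = (y, Some x) -> False.
Proof.
case: g1 => [[e1 i1]|[r1|c1]]; case: g2 => [[e2 i2]|[r2|c2]];
  rewrite ?Q_ring_ends ?Q_cross_ends /= => -[<- <-] [] E1 E1' E2 E2'.
- by move: (tedge_lt e2) (tedge_lt e1); rewrite E1 E2 => /ltn_trans lt /lt; rewrite ltnn.
- by move: (tedge_neq adj_irr e1); rewrite -E1 -E2 eqxx.
- by move: (tedge_neq adj_irr e1); rewrite -E1 -E2 eqxx.
- by move: (tedge_neq adj_irr e2); rewrite E1 E2 eqxx.
- by move: (succ4_succ4_neq (val r1).2); rewrite -E1' E2' eqxx.
- by move: (Q_ring_cross_neq r1 c2); rewrite E1 eqxx.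
- by move: (tedge_neq adj_irr e2); rewrite E1 E2 eqxx.
- by move: (Q_ring_cross_neq r2 c1); rewrite E1 eqxx.
- by move: (cross_lo_hi_neq (val c2).2 (val c1).2); rewrite E1' eqxx.
Qed.

Lemma Q_joins_inj g1 g2 x y : joins g1 x y -> joins g2 x y -> g1 = g2.
Proof.
case=> E1 [] E2; try by apply: Q_ends_inj; rewrite E1 E2.
- by case: (Q_ends_flip E1 E2).
- by case: (Q_ends_flip E2 E1).
Qed.

Definition ring_index (j : 'I_4) : 'I_3 := inord (odd j).+1.

Lemma ring_indexE j : ring_index j = (odd j).+1 :> nat.
Proof. by rewrite inordK //; case: odd. Qed.

Definition semi_at (w : VT) (i : 'I_3) (wi : tdeg adj w <= i) : Tsemi adj :=
  exist (fun p : VT * 'I_3 => tdeg adj p.1 <= p.2) (w, i) wi.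

Lemma ring_semi_subproof (r : Qring adj) : tdeg adj (val r).1 <= ring_index (val r).2.
Proof. by rewrite Qring_deg ring_indexE. Qed.

Lemma cross_semi_subproof (c : Qcross adj) : tdeg adj (val c).1 <= (ord_max : 'I_3).
Proof. by rewrite Qcross_deg. Qed.

Definition projQ (x : gV Q) : gV (T3 adj) := x.1.

Definition projQ_link (g : gL Q) : gL (T3 adj) :=
  match g with
  | inl (e, _) => inl e
  | inr (inl r) => inr (semi_at (ring_semi_subproof r))
  | inr (inr c) => inr (semi_at (cross_semi_subproof c))
  end.

Lemma projQ_edge_deg e x : x.1 = (val e).1 \/ x.1 = (val e).2 ->
  deg_in (fun g => projQ_link g == inl e) x = 1.
Proof.
case: x => a k /= a_end; apply: (@deg_in_eq1 _ _ _ (inl (e, k) : gL Q)) => //.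
- rewrite /end_deg /= !xpair_eqE eqxx !andbT.
  have ne := tedge_neq adj_irr e.
  by case: a_end => ->; rewrite eqxx ?(negPf ne) // eq_sym (negPf ne).
- case=> [[e' i]|[r|c]] //= /eqP [->]; rewrite /end_deg /= !xpair_eqE.
  by have [-> //|_] := eqVneq i k; rewrite !andbF.
Qed.

Lemma projQ_semi_deg_ring a (i : 'I_3) (ai : tdeg adj a <= i) k : tdeg adj a = 1 ->
  deg_in (fun g => projQ_link g == inr (semi_at ai)) (a, k) = 1.
Proof.
move=> leaf_a; pose b := (nat_of_ord i == 2).
have index_b j : (ring_index j == i) = (odd j == b).
  rewrite -val_eqE /= ring_indexE /b; move: ai (ltn_ord i); rewrite leaf_a.
  by case: (nat_of_ord i) => [|[|[|?]]] //= _ _; case: odd.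
have la : tdeg adj a == 1 by rewrite leaf_a.
apply: (@deg_in_eq1 _ _ _ (ring_link la (pick_ring k b))).
- by apply/eqP; congr inr; apply: sig_pair_eq => //=; apply/eqP; rewrite index_b odd_pick_ring.
- rewrite (end_degE _ (Q_ring_ends _)) /= !xpair_eqE eqxx ring_end_count.
  by rewrite (ring_ends_pick k (odd_pick_ring k b)) eqxx.
case=> [[e j]|[r|c]] //= /eqP [ra ri].
- rewrite (end_degE _ (Q_ring_ends r)) /= !xpair_eqE ra eqxx ring_end_count lt0b.
  move/eqP: ri; rewrite index_b => /eqP /(ring_ends_pick k) ->.
  by move=> /eqP rk; congr (inr (inl _)); apply: sig_pair_eq.
- by move: (Qcross_deg c); rewrite ra leaf_a.
Qed.

Lemma projQ_semi_deg_cross a (i : 'I_3) (ai : tdeg adj a <= i) k : tdeg adj a = 2 ->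
  deg_in (fun g => projQ_link g == inr (semi_at ai)) (a, k) = 1.
Proof.
move=> deg2_a.
have i_max : i = ord_max.
  by rewrite deg2_a in ai; apply/val_inj/eqP; rewrite /= eqn_leq -ltnS ltn_ord.
have la : tdeg adj a == 2 by rewrite deg2_a.
apply: (@deg_in_eq1 _ _ _ (cross_link la (pick_cross k))).
- by apply/eqP; congr inr; apply: sig_pair_eq => //=; rewrite i_max.
- rewrite (end_degE _ (Q_cross_ends _)) /= !xpair_eqE eqxx cross_end_count.
  by rewrite (cross_ends_pick k) eqxx.
case=> [[e j]|[r|c]] //= /eqP [ca _].
- by move: (Qring_deg r); rewrite ca deg2_a.
- rewrite (end_degE _ (Q_cross_ends c)) /= !xpair_eqE ca eqxx cross_end_count lt0b.
  by rewrite (cross_ends_pick k) => /eqP ck; congr (inr (inr _)); apply: sig_pair_eq.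
Qed.

Lemma projQ_semi_deg s x : x.1 = (val s).1 ->
  deg_in (fun g => projQ_link g == inr s) x = 1.
Proof.
case: s => [[a i] ai]; case: x => _ k /= ->.
have [leaf|deg2] : tdeg adj a = 1 \/ tdeg adj a = 2.
  move: (tdeg_gt0 T_tree T_maxdeg a) (leq_ltn_trans ai (ltn_ord i)).
  by case: (tdeg adj a) => [|[|[|?]]] //; [left | right].
- exact: projQ_semi_deg_ring.
- exact: projQ_semi_deg_cross.
Qed.

Lemma projQ_covering : covering projQ projQ_link.
Proof.
case=> [e|s] /=.
- rewrite (negPf (tedge_neq adj_irr e)); split; last exact: projQ_edge_deg.
  case=> [[e' i]|[r|c]] //= [->].
  by exists ((val e).1, i), ((val e).2, i); split=> //; left.
- split; last exact: projQ_semi_deg.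
  case=> [[e i]|[r|c]] //= [<-] /=; split=> //.
  + by move/eqP; rewrite xpair_eqE eqxx eq_sym (negPf (succ4_neq _)).
  + by move/eqP; rewrite xpair_eqE eqxx (negPf (cross_lo_hi_neq _ _)).
Qed.

Lemma card_Q4 : #|gV Q| = 4 * #|VT|.
Proof. by rewrite card_prod card_ord mulnC. Qed.

Section QCovering.
Variables (fv : gV Q -> gV (T3 adj)) (fl : gL Q -> gL (T3 adj)).
Hypothesis cov : covering fv fl.

Lemma card_fiber_Q4 u : #|[pred x | fv x == u]| = 4.
Proof.
have fibers : #|gV Q| = #|VT| * #|[pred x | fv x == u]|.
  rewrite -sum1_card (partition_big fv predT) // -sum_nat_const; apply: eq_big => // z _.
  rewrite -(card_fiber_T3 adj_sym adj_irr T_tree cov z u) -sum1_card.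
  by apply: eq_bigl => x; rewrite !inE.
have VT_gt0 : 0 < #|VT| by apply/card_gt0P; exists u.
by move/eqP: fibers; rewrite card_Q4 mulnC eqn_mul2l eqn0Ngt VT_gt0 => /eqP <-.
Qed.

Lemma fiber_Q4_mem (a b c d p : gV Q) : uniq [:: a; b; c; d] ->
  fv b = fv a -> fv c = fv a -> fv d = fv a -> fv p = fv a -> p \in [:: a; b; c; d].
Proof.
move=> U fb fc fd fp; apply/negPn/negP => p_out.
have U5 : uniq [:: p; a; b; c; d] by rewrite cons_uniq p_out.
have : size [:: p; a; b; c; d] <= #|[pred z | fv z == fv a]|.
  rewrite -(card_uniqP U5); apply: subset_leq_card; apply/subsetP => z.
  by rewrite !inE => /orP [/eqP -> | /or4P [] /eqP ->]; rewrite ?fp ?fb ?fc ?fd.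
by rewrite card_fiber_Q4.
Qed.

Lemma Q_semi_nbr (s : Tsemi adj) v : fv v = (val s).1 ->
  exists2 g, fl g = inr s & exists2 y, joins g v y & fv y = fv v.
Proof.
move=> fs; have [_ deg] := covering_semi cov (h := inr s) erefl.
have [g /eqP Fg pos] : exists2 g, fl g == inr s & 0 < end_deg v g.
  by apply: deg_in_gt0; rewrite deg.
have [a [b [Eg _]]] := Q_link_ends g; have [y J] := end_deg_gt0_joins Eg pos.
exists g => //; exists y => //.
by have [-> ->] := covering_semi_joins cov (h := inr s) erefl Fg J.
Qed.

Lemma Q_leaf_fiber_nbrs v : tdeg adj (fv v) <= 1 ->
  exists g1 g2 y1 y2,
    [/\ joins g1 v y1, joins g2 v y2, fv y1 = fv v, fv y2 = fv v & y1 != y2].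
Proof.
move=> leaf.
have s1 : tdeg adj (fv v) <= (inord 1 : 'I_3) by rewrite inordK.
have s2 : tdeg adj (fv v) <= (inord 2 : 'I_3) by rewrite inordK // (leq_trans leaf).
have [g1 F1 [y1 J1 f1]] := @Q_semi_nbr (semi_at s1) v erefl.
have [g2 F2 [y2 J2 f2]] := @Q_semi_nbr (semi_at s2) v erefl.
exists g1, g2, y1, y2; split=> //; apply/eqP => y12; subst y2.
by move: F2; rewrite -(Q_joins_inj J1 J2) F1 => -[]; move/(congr1 val); rewrite /= !inordK.
Qed.

Lemma Q_leaf_fiber_parity x : tdeg adj x.1 != 1 -> tdeg adj (fv x) <= 1 ->
  forall t, fv t = fv x -> odd t.2 = odd x.2.
Proof.
move=> inner_x leaf t ft; apply/eqP/negPn/negP => par_t.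
have keep g y : joins g x y -> odd y.2 = odd x.2.
  move=> J; apply/eqP/negPn/negP; rewrite eq_sym => /(Q_joins_parity J) [leaf_x _].
  by rewrite leaf_x in inner_x.
have not_t y : odd y.2 = odd x.2 -> y != t.
  by move=> py; apply: contraNneq par_t => <-; rewrite py.
have [g1 [g2 [y1 [y2 [J1 J2 f1 f2 y12]]]]] := Q_leaf_fiber_nbrs leaf.
have U : uniq [:: x; y1; y2; t].
  rewrite /= !inE !negb_or (Q_joins_neq J1) (Q_joins_neq J2) y12.
  by rewrite !not_t // ?(keep _ _ J1) ?(keep _ _ J2).
(* y is joined to t by a ring link and to x by a tree link *)
have from_nbr g h y : joins g x y -> joins h t y -> y = (t.1, x.2).
  move=> Jx Jt; have [leaf_t ty] : tdeg adj t.1 = 1 /\ t.1 = y.1.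
    by apply: (Q_joins_parity Jt); rewrite (keep _ _ Jx).
  have xy : x.1 != y.1 by apply: contraTneq inner_x => ->; rewrite -ty leaf_t.
  by rewrite [y]surjective_pairing -ty -(Q_joins_copy Jx xy).
have other_end h p : joins h t p -> fv p = fv x -> p = (t.1, x.2).
  move=> Jt /(fiber_Q4_mem U f1 f2 ft).
  rewrite !inE => /or4P [] /eqP Ep; rewrite Ep in Jt *.
  - by move: par_t; rewrite (keep _ _ (joins_sym Jt)) eqxx.
  - exact: from_nbr _ _ _ J1 Jt.
  - exact: from_nbr _ _ _ J2 Jt.
  - by move: (Q_joins_neq Jt); rewrite eqxx.
have leaf_t : tdeg adj (fv t) <= 1 by rewrite ft.
have [h1 [h2 [p1 [p2 [K1 K2 q1 q2 p12]]]]] := Q_leaf_fiber_nbrs leaf_t.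
move: p12; rewrite (other_end _ _ K1 (etrans q1 ft)).
by rewrite (other_end _ _ K2 (etrans q2 ft)) eqxx.
Qed.

Lemma Q_ring_folds l j : tdeg adj l = 1 ->
  fv (l, succ4 j) = fv (l, j) \/ fv (l, pred4 j) = fv (l, j).
Proof.
move=> /eqP Hl; have [|f01] := eqVneq (fv (l, succ4 j)) (fv (l, j)); [by left | right].
apply/eqP/negPn/negP => f03.
have := ring_link_joins Hl (pred4 j); rewrite pred4K => J3.
apply: (covering_T3_no_4cycle adj_sym adj_irr T_tree cov (ring_link_joins Hl j)
          (ring_link_joins Hl _) (ring_link_joins Hl _) J3).
- by apply/eqP => -[] /eqP; rewrite eq_sym (negPf (succ4_neq j)).
- by apply/eqP => -[] /eqP; rewrite eq_sym (negPf (pred4_neq j)).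
- by rewrite eq_sym.
- by rewrite eq_sym.
Qed.

Lemma Q_fiber_parity_step z z' b : adj z z' ->
  (forall v, fv v = z -> odd v.2 = b) -> forall v', fv v' = z' -> odd v'.2 = b.
Proof.
move=> zz' par_z v' fv'.
have v'z : adj (fv v') z by rewrite fv' adj_sym.
have [g [[l j] [J fv_v]]] := covering_T3_lift_adj adj_sym adj_irr cov v'z.
have par_v := par_z _ fv_v.
apply/eqP/negPn/negP => par_v'.
have [leaf_l _] : tdeg adj l = 1 /\ l = v'.1.
  by apply: (Q_joins_parity (joins_sym J)); rewrite par_v eq_sym.
have [fold | fold] := Q_ring_folds j leaf_l; move: (par_z _ (etrans fold fv_v)).
- by rewrite odd_succ4 /= par_v; case: (b).
- by rewrite odd_pred4 /= par_v; case: (b).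
Qed.

Lemma Q_covering_deg_gt1 x : tdeg adj x.1 != 1 -> 1 < tdeg adj (fv x).
Proof.
move=> inner_x; rewrite ltnNge; apply/negP => leaf.
have par_all : forall z v, fv v = z -> odd v.2 = odd x.2.
  apply: (connected_ind T_tree (w := fv x)); last exact: Q_leaf_fiber_parity.
  by move=> z z' par zz'; apply: Q_fiber_parity_step zz' par.
by move: (par_all _ (x.1, succ4 x.2) erefl); rewrite /= odd_succ4; case: odd.
Qed.

End QCovering.
End Q4.

Theorem lemma18 (VT : finType) (adj : rel VT)
  (adj_sym : symmetric adj) (adj_irr : irreflexive adj)
  (T_tree : is_tree adj) (T_maxdeg : max_degree3 adj) :
  covers (Q4 adj) (T3 adj) /\
  (forall (fv : gV (Q4 adj) -> gV (T3 adj)) (fl : gL (Q4 adj) -> gL (T3 adj)),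
     covering fv fl ->
     (forall u : gV (T3 adj), #|[pred x | fv x == u]| = 4) /\
     (forall x : gV (Q4 adj), relevant adj x.1 -> semi_simple (fv x))).
Proof.
split; first by exists (@projQ _ adj), (@projQ_link _ adj); exact: projQ_covering.
move=> fv fl cov; split; first exact: card_fiber_Q4 cov.
(* Relevance is only used through deg_T x.1 >= 2. *)
move=> x rel_x; apply: semi_simple_T3 => //.
apply: (Q_covering_deg_gt1 adj_sym adj_irr T_tree cov).
by case/orP: rel_x => [|/andP []] /eqP ->.
Qed.
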